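(* Let $A$ be a non-zero Abelian group which is either a torsion group or a non-reduced group. If the endomorphism ring $\mathrm{End}\,A$ is centrally essential, then $\mathrm{End}\,A$ is commutative.
   Context: All rings are associative with non-zero identity. A ring $R$ is centrally essential if for every non-zero $a\in R$ there exist non-zero elements $x,y$ of the center of $R$ with $ax=y$. An Abelian group is reduced if it has no non-zero divisible subgroup, and non-reduced otherwise. *)

From HB Require Import structures.
From mathcomp Require Import all_boot all_order all_algebra.
Set Implicit Arguments. Unset Strict Implicit. Unset Printing Implicit Defensive.
Import GRing.Theory.
Local Open Scope ring_scope.

(* The endomorphism ring End A is the
   set of additive maps A -> A, with pointwise addition and composition as
   multiplication ((f g) v = f (g v)); equality of endomorphisms is pointwise. *)

Definition is_end (A : zmodType) (f : A -> A) : Prop :=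
  forall x y : A, f (x - y) = f x - f y.

Definition end_nonzero (A : zmodType) (f : A -> A) : Prop :=
  exists v : A, f v != 0.

Definition end_central (A : zmodType) (f : A -> A) : Prop :=
  is_end f /\ forall g : A -> A, is_end g -> f \o g =1 g \o f.

Definition end_centrally_essential (A : zmodType) : Prop :=
  forall a : A -> A, is_end a -> end_nonzero a ->
    exists x y : A -> A,
      [/\ end_central x, end_central y, end_nonzero x, end_nonzero y
        & a \o x =1 y].

Definition end_commutative (A : zmodType) : Prop :=
  forall f g : A -> A, is_end f -> is_end g -> f \o g =1 g \o f.

Definition torsion_group (A : zmodType) : Prop :=
  forall x : A, exists n : nat, (0 < n)%N /\ x *+ n = 0.

Definition is_subgroup (A : zmodType) (D : A -> Prop) : Prop :=
  D 0 /\ forall x y, D x -> D y -> D (x - y).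

Definition divisible_subgroup (A : zmodType) (D : A -> Prop) : Prop :=
  is_subgroup D /\
  forall x, D x -> forall n : nat, (0 < n)%N -> exists y, D y /\ y *+ n = x.

Definition non_reduced (A : zmodType) : Prop :=
  exists D : A -> Prop, divisible_subgroup D /\ exists x, D x /\ x != 0.

From HB Require Import structures.
From mathcomp Require Import all_boot all_order all_algebra.
From mathcomp Require Import boolp classical_sets.
Set Implicit Arguments. Unset Strict Implicit. Unset Printing Implicit Defensive.
Import Order.TTheory GRing.Theory Num.Theory.
Local Open Scope ring_scope.

(* The key consequence of central essentiality is that End A has no nonzero
   "corner" maps: if e h = h and h e = 0, then h = 0.  Indeed, pick central
   non-zero x, y with h x = y; then y = e y = y e = h x e = h e x = 0.

   Corners arise from direct summands.  A divisible subgroup D is a summand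
   (injectivity, via Zorn's lemma), and so is a bounded pure cyclic subgroup;
   a homomorphism from D + <z> into D that kills D and sends z to w then
   extends to a corner, which forces w = 0.  For torsion A this shows that
   every p-socle A[p] is cyclic: either some element of A[p] has finite
   height, giving a pure cyclic summand, or all of A[p] is divisible by every
   power of p, giving a quasi-cyclic divisible subgroup.  Then every
   endomorphism acts on each torsion element x as multiplication by an
   integer, so any two endomorphisms commute on the torsion part.

   If A is non-reduced but not torsion, the same principle applied to a
   non-zero divisible subgroup D shows that A = D + t(A) and that A / t(A)
   has rank one.  So the commutator f g - g f kills t(A) and has a torsion,
   divisible image; by the corner principle once more, that image is 0. *)

Section Endomorphisms.
Variable A : zmodType.
Implicit Types (f g : A -> A) (x y : A).

Definition end_additive f (hf : is_end f) : {additive A -> A} :=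
  HB.pack f (GRing.isZmodMorphism.Build A A f hf).

Lemma is_end0 f : is_end f -> f 0 = 0.
Proof. by move=> hf; exact: (raddf0 (end_additive hf)). Qed.

Lemma is_endD f x y : is_end f -> f (x + y) = f x + f y.
Proof. by move=> hf; exact: (raddfD (end_additive hf) x y). Qed.

Lemma is_endMn f x n : is_end f -> f (x *+ n) = f x *+ n.
Proof. by move=> hf; exact: (raddfMn (end_additive hf) n x). Qed.

Lemma is_endMz f x k : is_end f -> f (x *~ k) = f x *~ k.
Proof. by move=> hf; exact: (raddfMz (end_additive hf) k x). Qed.

Lemma is_end_comp f g : is_end f -> is_end g -> is_end (f \o g).
Proof. by move=> hf hg x y /=; rewrite hg hf. Qed.

Lemma is_endB f g : is_end f -> is_end g -> is_end (fun x => f x - g x).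
Proof. by move=> hf hg x y; rewrite hf hg !opprD !opprK addrACA. Qed.

End Endomorphisms.

Section Subgroups.
Variables (A : zmodType) (S : A -> Prop).
Hypothesis sgS : is_subgroup S.
Implicit Types (x y z t : A).

Lemma mulrz_absz x (k : int) : x *~ k = x *+ `|k| \/ x *~ k = - (x *+ `|k|).
Proof. by case: k => n; [left | right; rewrite NegzE mulrNz]. Qed.

Lemma subgroup0 : S 0. Proof. by case: sgS. Qed.

Lemma subgroupB x y : S x -> S y -> S (x - y).
Proof. by case: sgS => _; apply. Qed.

Lemma subgroupN x : S x -> S (- x).
Proof. by move=> Sx; rewrite -sub0r; apply: subgroupB => //; exact: subgroup0. Qed.

Lemma subgroupD x y : S x -> S y -> S (x + y).
Proof. by move=> Sx /subgroupN Sy; rewrite -[y]opprK; exact: subgroupB. Qed.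

Lemma subgroupMn x n : S x -> S (x *+ n).
Proof.
move=> Sx; elim: n => [|n IHn]; first by rewrite mulr0n; exact: subgroup0.
by rewrite mulrS; exact: subgroupD.
Qed.

Lemma subgroupMz x k : S x -> S (x *~ k).
Proof.
by move=> Sx; case: (mulrz_absz x k) => ->; last apply: subgroupN; exact: subgroupMn.
Qed.

Definition eqmod x y := S (x - y).

Lemma eqmod_refl x : eqmod x x.
Proof. by rewrite /eqmod subrr; exact: subgroup0. Qed.

Lemma eqmod_sym x y : eqmod x y -> eqmod y x.
Proof. by move=> Sxy; rewrite /eqmod -opprB; exact: subgroupN. Qed.

Lemma eqmod_trans x y z : eqmod x y -> eqmod y z -> eqmod x z.
Proof. by rewrite /eqmod => Sxy /(subgroupD Sxy); rewrite addrA subrK. Qed.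

Lemma eqmodB x y z t : eqmod x y -> eqmod z t -> eqmod (x - z) (y - t).
Proof.
rewrite /eqmod => Sxy Szt.
suff -> : x - z - (y - t) = x - y - (z - t) by exact: subgroupB.
by rewrite !opprD !opprK addrACA [- z + _]addrC -addrACA.
Qed.

Lemma eqmodMz x y k : eqmod x y -> eqmod (x *~ k) (y *~ k).
Proof. by rewrite /eqmod -mulrzBl; apply: subgroupMz. Qed.

End Subgroups.

Section Multiples.
Variable A : zmodType.
Implicit Types (f : A -> A) (x y : A).

Definition in_cycle x y := exists c : int, y = x *~ c.

Lemma in_cycle_subgroup x : is_subgroup (in_cycle x).
Proof.
split; first by exists 0; rewrite mulr0z.
by move=> _ _ [c ->] [c' ->]; exists (c - c'); rewrite mulrzBr.
Qed.

Lemma mulrnzAC x n (k : int) : x *~ k *+ n = x *+ n *~ k.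
Proof. by rewrite !pmulrn mulrzAC. Qed.

Lemma mulrz_dvdz_eq0 x N (c : int) : x *+ N = 0 -> (N%:Z %| c)%Z -> x *~ c = 0.
Proof. by move=> xN /dvdzP [q ->]; rewrite -mulrzA_C -pmulrn xN mul0rz. Qed.

Lemma mulrz_coprime_inv x N (k : int) : x *+ N = 0 -> coprimez k N%:Z ->
  exists s : int, x = x *~ k *~ s.
Proof.
move=> xN /eqP kN1; have [u [v uv]] := Bezoutz k N%:Z; exists u.
have : x *~ (u * k + v * N%:Z) = x *~ k *~ u.
  by rewrite mulrzDr -!mulrzA_C -pmulrn xN mul0rz addr0.
by rewrite uv kN1 mulr1z.
Qed.

Lemma coprimez_prime p (k : int) : prime p -> coprimez k p%:Z = ~~ (p%:Z %| k)%Z.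
Proof. by move=> pp; rewrite /coprimez /gcdz absz_nat gcdnC -prime_coprime. Qed.

Lemma order_pexp_dvdz p x j (c : int) : prime p ->
  x *+ p ^ j.+1 = 0 -> x *+ p ^ j != 0 -> x *~ c = 0 -> ((p ^ j.+1)%:Z %| c)%Z.
Proof.
move=> pp xpj xpj0 xc; have [u [v uv]] := Bezoutz c (p ^ j.+1)%:Z.
have xg : x *+ gcdn `|c| (p ^ j.+1) = 0.
  have : x *~ gcdz c (p ^ j.+1)%:Z = 0.
    by rewrite -uv mulrzDr -!mulrzA_C xc -pmulrn xpj !mul0rz addr0.
  by rewrite /gcdz absz_nat pmulrn.
have /(dvdn_pfactor _ _ pp) [i ij gi] := dvdn_gcdr `|c| (p ^ j.+1).
move: ij; rewrite leq_eqVlt => /predU1P [ij | /ltnSE ij].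
  by rewrite dvdzE absz_nat -ij -gi dvdn_gcdl.
by move: xpj0; rewrite -(subnKC ij) expnD mulrnA -gi xg mul0rn eqxx.
Qed.

Lemma exact_height x p m : ~ (exists y, y *+ p ^ m = x) ->
  exists n y, y *+ p ^ n = x /\ ~ exists y, y *+ p ^ n.+1 = x.
Proof.
move=> x_ht; pose no_root k := `[< ~ exists y, y *+ p ^ k = x >].
have [[|n] /asboolP x_htn minn] := ex_minnP (ex_intro no_root m (asboolT x_ht)).
  by case: x_htn; exists x; rewrite expn0 mulr1n.
exists n; have [[y yx] | x_htn'] := pselect (exists y, y *+ p ^ n = x).
  by exists y.
by have := minn n (asboolT x_htn'); rewrite ltnn.
Qed.

Lemma end_in_cycle_coprime f x r m : is_end f -> coprime r m ->
    in_cycle (x *+ m) (f (x *+ m)) -> in_cycle (x *+ r) (f (x *+ r)) ->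
  in_cycle x (f x).
Proof.
move=> hf /eqP rm1 [cm fm] [cr fr]; have [u [v uv]] := Bezoutz r%:Z m%:Z.
have xE : x = x *+ r *~ u + x *+ m *~ v.
  by rewrite !pmulrn !mulrzA_C -mulrzDr uv /gcdz !absz_nat rm1 mulr1z.
exists (r%:Z * cr * u + m%:Z * cm * v).
by rewrite {1}xE (is_endD _ _ hf) !(is_endMz _ _ hf) fr fm mulrzDr !mulrzA -!pmulrn.
Qed.

End Multiples.

Section TorsionElements.
Variable A : zmodType.
Implicit Types (f : A -> A) (x y : A).

Definition torsion_elt x := exists n, (0 < n)%N /\ x *+ n = 0.

Lemma torsion_elt_subgroup : is_subgroup torsion_elt.
Proof.
split; first by exists 1%N; rewrite mul0rn.
move=> x y [n [n0 xn]] [m [m0 ym]]; exists (n * m)%N; rewrite muln_gt0 n0 m0.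
by rewrite mulrnBl mulrnA xn mulnC mulrnA ym !mul0rn subrr.
Qed.

Lemma torsion_elt_end f x : is_end f -> torsion_elt x -> torsion_elt (f x).
Proof. by move=> hf [n [n0 xn]]; exists n; rewrite -is_endMn // xn is_end0. Qed.

Lemma torsion_elt_mulrzK x (k : int) : k != 0 -> torsion_elt (x *~ k) -> torsion_elt x.
Proof.
move=> k0 [n [n0 xkn]]; exists (`|k| * n)%N; rewrite muln_gt0 absz_gt0 k0 n0 mulrnA.
split=> //; case: (mulrz_absz x k) xkn => -> //.
by rewrite mulNrn => /eqP; rewrite oppr_eq0 => /eqP.
Qed.

Lemma eqmod_torsion_end f x y : is_end f ->
  eqmod torsion_elt x y -> eqmod torsion_elt (f x) (f y).
Proof. by move=> hf; rewrite /eqmod -hf; exact: torsion_elt_end. Qed.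

End TorsionElements.

Arguments torsion_elt {A} x.

Section CentralEssentiality.
Variable A : zmodType.
Hypothesis CE : end_centrally_essential A.

Lemma ce_corner_eq0 (e h : A -> A) : is_end e -> is_end h ->
  (forall v, e (h v) = h v) -> (forall v, h (e v) = 0) -> forall v, h v = 0.
Proof.
move=> he hh ehh hee v; apply/eqP; apply: contraT => hv.
have [x [y [[_ cx] [_ cy] _ [w yw] hxy]]] := CE hh (ex_intro _ v hv).
have eyy : e (y w) = y w by rewrite -hxy /= ehh.
have ye0 : y (e w) = 0 by rewrite -hxy /=; have /= -> := cx e he w.
by move: yw; rewrite -eyy; have /= <- := cy e he w; rewrite ye0 eqxx.
Qed.

End CentralEssentiality.

(** * Extending partial homomorphisms *)

Section PartialHomomorphisms.
Variables (A : zmodType) (T : A -> Prop).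
Hypothesis sgT : is_subgroup T.
Implicit Types (G : set (A * A)) (x y : A).

Definition partial_hom G :=
  [/\ G (0, 0),
      (forall x y x' y', G (x, y) -> G (x', y') -> G (x - x', y - y')),
      (forall y, G (0, y) -> y = 0)
    & (forall x y, G (x, y) -> T y)].

Section OnePartialHom.
Variable G : set (A * A).
Hypothesis hG : partial_hom G.

Lemma partial_homN x y : G (x, y) -> G (- x, - y).
Proof. by case: hG => G00 GB _ _ Gxy; rewrite -sub0r -(sub0r y); apply: GB. Qed.

Lemma partial_homD x y x' y' : G (x, y) -> G (x', y') -> G (x + x', y + y').
Proof.
by case: hG => _ GB _ _ Gxy /partial_homN Gxy'; rewrite -[x']opprK -[y']opprK; apply: GB.
Qed.

Lemma partial_homMn x y n : G (x, y) -> G (x *+ n, y *+ n).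
Proof.
case: hG => G00 _ _ _ Gxy; elim: n => [|n IHn]; first by rewrite !mulr0n.
by rewrite !mulrS; apply: partial_homD.
Qed.

Lemma partial_homMz x y k : G (x, y) -> G (x *~ k, y *~ k).
Proof.
move=> Gxy; case: k => n; first by rewrite -!pmulrn; exact: partial_homMn.
by rewrite !NegzE !mulrNz -!pmulrn; apply/partial_homN/partial_homMn.
Qed.

Lemma partial_hom_functional x y y' : G (x, y) -> G (x, y') -> y = y'.
Proof.
case: hG => _ GB G0 _ Gxy Gxy'; apply/eqP; rewrite -subr_eq0; apply/eqP.
by apply: G0; rewrite -(subrr x); apply: GB.
Qed.

End OnePartialHom.

(* Whenever x has order d modulo the domain of an extension G of G0, the value
   of G at d x is divisible by d in T. *)
Definition baer_condition G0 :=
  forall G, partial_hom G -> (forall q, G0 q -> G q) ->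
  forall x (d : nat), (0 < d)%N ->
  (forall k : int, (exists y, G (x *~ k, y)) <-> (d%:Z %| k)%Z) ->
  forall y, G (x *+ d, y) -> exists2 t, T t & t *+ d = y.

Lemma partial_hom_adjoin G x t : partial_hom G -> T t ->
    (forall k y, G (x *~ k, y) -> y = t *~ k) ->
  partial_hom (fun q => exists a b k, G (a, b) /\ q = (a + x *~ k, b + t *~ k)).
Proof.
move=> hG Tt xt; have [G00 GB G0 GT] := hG; split.
- by exists 0, 0, 0; rewrite !mulr0z !addr0.
- move=> _ _ _ _ [a [b [k [Gab [-> ->]]]]] [a' [b' [k' [Gab' [-> ->]]]]].
  exists (a - a'), (b - b'), (k - k'); split; first exact: GB.
  by congr pair; rewrite mulrzBr opprD addrACA.
- move=> y [a [b [k [Gab [a0 ->]]]]].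
  have a_eq : a = x *~ - k by apply/eqP; rewrite mulrNz -addr_eq0 a0.
  by move: Gab; rewrite a_eq => /xt ->; rewrite mulrNz addNr.
- move=> _ _ [a [b [k [Gab [_ ->]]]]]; apply: subgroupD => //; first exact: GT Gab.
  exact: subgroupMz.
Qed.

Lemma partial_hom_dom_dvdz G x d y0 : partial_hom G -> (0 < d)%N ->
    G (x *+ d, y0) -> (forall n, (0 < n)%N -> (exists y, G (x *+ n, y)) -> (d <= n)%N) ->
  forall k : int, (exists y, G (x *~ k, y)) <-> (d%:Z %| k)%Z.
Proof.
move=> hG d0 Gd dmin k; split=> [[y Gk] | /dvdzP [q ->]]; last first.
  by exists (y0 *~ q); rewrite -mulrzA_C -pmulrn; apply: partial_homMz.
apply/dvdz_mod0P; set r := (k %% d)%Z.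
have d0z : d%:Z != 0 by rewrite eqz_nat -lt0n.
have Gr : G (x *~ r, y - y0 *~ (k %/ d)%Z).
  suff -> : r = k - (k %/ d)%Z * d.
    rewrite mulrzBr -mulrzA_C -pmulrn.
    by have [_ GB _ _] := hG; apply: GB => //; exact: partial_homMz.
  by apply/eqP; rewrite eq_sym subr_eq addrC -divz_eq.
have r_ge0 : 0 <= r by exact: modz_ge0.
have r_lt : r < d%:Z by apply: ltz_pmod; rewrite ltz_nat.
apply/eqP; apply: contraTT r_lt => rnz.
rewrite -leNgt -(gez0_abs r_ge0) lez_nat; apply: dmin; first by rewrite absz_gt0.
by exists (y - y0 *~ (k %/ d)%Z); rewrite pmulrn gez0_abs.
Qed.

Lemma baer_compatible_value x G0 G : baer_condition G0 -> partial_hom G ->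
    (forall q, G0 q -> G q) ->
  exists2 t, T t & forall k y, G (x *~ k, y) -> y = t *~ k.
Proof.
move=> hB hG G0G; pose dom n := `[< (0 < n)%N /\ exists y, G (x *+ n, y) >].
have [[n /asboolP dom_n] | no_dom] := pselect (exists n, dom n); last first.
  exists 0 => [|k y Gk]; first exact: subgroup0.
  have [k0 | knz] := eqVneq k 0.
    by move: Gk; rewrite k0 mulr0z mul0rz; have [_ _ G0y _] := hG; apply: G0y.
  case: no_dom; exists `|k|%N; apply/asboolP; split; first by rewrite absz_gt0.
  case: (mulrz_absz x k) Gk => -> Gk; first by exists y.
  by exists (- y); rewrite -[x *+ _]opprK; apply: partial_homN.
have [d /asboolP [d0 [y0 Gd]] dmin] := ex_minnP (ex_intro dom n (asboolT dom_n)).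
have dvd_dom := partial_hom_dom_dvdz hG d0 Gd (fun m m0 hm => dmin m (asboolT (conj m0 hm))).
have [t Tt td] := hB G hG G0G x d d0 dvd_dom y0 Gd.
exists t => // k y Gk; have /dvdzP [q kq] := (dvd_dom k).1 (ex_intro _ y Gk).
move: Gk; rewrite kq -mulrzA_C -pmulrn => Gk.
by rewrite (partial_hom_functional hG Gk (partial_homMz hG q Gd)) -td -mulrzA_C -pmulrn.
Qed.

Lemma partial_hom_extend_step x G0 G : baer_condition G0 -> partial_hom G ->
    (forall q, G0 q -> G q) ->
  exists G', [/\ partial_hom G', (forall q, G q -> G' q) & exists y, G' (x, y)].
Proof.
move=> hB hG G0G; have [t Tt xt] := baer_compatible_value x hB hG G0G.
exists (fun q => exists a b k, G (a, b) /\ q = (a + x *~ k, b + t *~ k)); split.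
- exact: partial_hom_adjoin.
- by move=> [a b] Gab; exists a, b, 0; rewrite !mulr0z !addr0.
- by exists t, 0, 0, 1; have [G00 _ _ _] := hG; rewrite !mulr1z !add0r.
Qed.

Lemma partial_hom_chain_union G0 (F : set (set (A * A))) : partial_hom G0 ->
    (forall M, F M -> partial_hom (fun q => M q \/ G0 q)) -> total_on F subset ->
  partial_hom (fun q => (\bigcup_(M in F) M)%classic q \/ G0 q).
Proof.
move=> hG0 hF Ftot; set U := fun q => _ \/ _.
have common q1 q2 : U q1 -> U q2 ->
    exists2 Y, partial_hom Y & [/\ forall q, Y q -> U q, Y q1 & Y q2].
  have inU M : F M -> forall q, M q \/ G0 q -> U q.
    by move=> FM q [Mq | G0q]; [left; exists M | right].
  move=> [[M1 FM1 M1q] | G0q1] [[M2 FM2 M2q] | G0q2].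
  - have [M12 | M21] := Ftot _ _ FM1 FM2.
      exists (fun q => M2 q \/ G0 q); first exact: hF.
      by split; [exact: inU | left; exact: M12 | left].
    exists (fun q => M1 q \/ G0 q); first exact: hF.
    by split; [exact: inU | left | left; exact: M21].
  - by exists (fun q => M1 q \/ G0 q); [exact: hF | split; [exact: inU | left | right]].
  - by exists (fun q => M2 q \/ G0 q); [exact: hF | split; [exact: inU | right | left]].
  - by exists G0 => //; split=> // q; right.
have [G00 _ _ _] := hG0; split; first by right.
- move=> x y x' y' U1 U2; have [Y [_ YB _ _] [YU Y1 Y2]] := common _ _ U1 U2.
  exact/YU/YB.
- by move=> y U0; have [Y [_ _ Y0 _] [_ Y0y _]] := common _ _ U0 U0; exact: Y0.
- by move=> x y Uxy; have [Y [_ _ _ YT] [_ Yxy _]] := common _ _ Uxy Uxy; exact: YT Yxy.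
Qed.

Lemma partial_hom_extend G0 : partial_hom G0 -> baer_condition G0 ->
  exists f, [/\ is_end f, (forall x y, G0 (x, y) -> f x = y) & forall x, T (f x)].
Proof.
move=> hG0 hB; pose P M := partial_hom (fun q => M q \/ G0 q).
have [M [PM Mmax]] := @Zorn_bigcup _ P (fun F FP => partial_hom_chain_union hG0 FP).
have dom_total x : exists y, M (x, y) \/ G0 (x, y).
  apply: contrapT => /forallNP x_out.
  have [G' [hG' MG' [y G'xy]]] := partial_hom_extend_step x hB PM (fun q G0q => or_intror G0q).
  apply: (Mmax G').
    split=> [q Mq | /(_ _ G'xy) Mxy]; [by apply: MG'; left | by apply: (x_out y); left].
  rewrite /P; suff -> : (fun q => G' q \/ G0 q) = G' by [].
  apply: funext => q; apply: propext.
  by split=> [[// | G0q] | G'q]; [apply: MG'; right | left].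
have [f Gf] := choice dom_total.
have [_ GB _ GT] := PM.
exists f; split=> [x y | x y G0xy | x]; last exact: GT (Gf x).
  by apply: (partial_hom_functional PM (Gf (x - y))); apply: GB.
by apply: (partial_hom_functional PM (Gf x)); right.
Qed.

End PartialHomomorphisms.

Section DivisibleSubgroups.
Variable A : zmodType.
Implicit Types (D : A -> Prop) (x w z : A).

Lemma divisible_baer D G0 : divisible_subgroup D -> baer_condition D G0.
Proof.
move=> [_ divD] G hG _ x d d0 _ y Gy; have [_ _ _ GD] := hG.
by have [t [Dt td]] := divD y (GD _ _ Gy) d d0; exists t.
Qed.

Lemma divisible_projection D : divisible_subgroup D ->
  exists e, [/\ is_end e, (forall x, D x -> e x = x) & forall x, D (e x)].
Proof.
move=> divD; have sgD := divD.1.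
pose G := fun q : A * A => D q.1 /\ q.2 = q.1.
have hG : partial_hom D G.
  split=> [|x y x' y' [/= Dx ->] [/= Dx' ->] | y [_ /= ->] | x y [Dx /= ->]] //.
  - by split=> //; exact: subgroup0.
  - by split=> //; exact: subgroupB.
have [e [he eG De]] := partial_hom_extend sgD hG (divisible_baer divD).
by exists e; split=> // x Dx; apply: eG.
Qed.

Hypothesis CE : end_centrally_essential A.

(* The map D + <z> -> D with D |-> 0 and z |-> w is a corner for a projection
   onto D. *)
Lemma ce_divisible_eq0 D w z : divisible_subgroup D -> D w ->
  (forall k : int, D (z *~ k) -> w *~ k = 0) -> w = 0.
Proof.
move=> divD Dw zw; have sgD := divD.1.
have [e [he eD De]] := divisible_projection divD.
pose G := fun q : A * A => exists y k, D y /\ q = (y + z *~ k, w *~ k).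
have hG : partial_hom D G.
  split.
  - by exists 0, 0; split; [exact: subgroup0 | rewrite !mulr0z addr0].
  - move=> _ _ _ _ [y [k [Dy [-> ->]]]] [y' [k' [Dy' [-> ->]]]].
    exists (y - y'), (k - k'); split; first exact: subgroupB.
    by congr pair; rewrite mulrzBr; first rewrite opprD addrACA.
  - move=> _ [y [k [Dy [yz ->]]]]; apply: zw.
    have -> : z *~ k = - y by apply/eqP; rewrite -addr_eq0 addrC yz.
    exact: subgroupN.
  - by move=> _ _ [y [k [_ [_ ->]]]]; exact: subgroupMz.
have [h [hh hG' hD]] := partial_hom_extend sgD hG (divisible_baer divD).
rewrite -(hG' z w); last by exists 0, 1; split; [exact: subgroup0 | rewrite !mulr1z add0r].
apply: (ce_corner_eq0 CE he hh) => v; first by apply: eD; exact: hD.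
by apply: hG'; exists (e v), 0; split=> //; rewrite !mulr0z addr0.
Qed.

End DivisibleSubgroups.

(** * Torsion groups *)

Section PTower.
Variables (A : zmodType) (p : nat) (us : nat -> A).
Hypothesis pp : prime p.
Hypothesis us_root : forall j, us j.+1 *+ p = us j.
Hypothesis us0_p : us 0%N *+ p = 0.

Lemma tower_mulrn i j : us (j + i) *+ p ^ i = us j.
Proof.
elim: i j => [|i IHi] j; first by rewrite addn0 expn0 mulr1n.
by rewrite addnS expnS mulrnA us_root IHi.
Qed.

Lemma tower_order j : us j *+ p ^ j.+1 = 0.
Proof. by rewrite expnSr mulrnA -{1}[j]add0n tower_mulrn. Qed.

Definition tower_span x := exists j (c : int), x = us j *~ c.

Lemma tower_span_divisible : divisible_subgroup tower_span.
Proof.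
have sg_span : is_subgroup tower_span.
  split; first by exists 0%N, 0; rewrite mulr0z.
  move=> _ _ [j [c ->]] [j' [c' ->]].
  exists (j + j')%N, (c * (p ^ j')%:Z - c' * (p ^ j)%:Z).
  by rewrite mulrzBr -!mulrzA_C -!pmulrn tower_mulrn addnC tower_mulrn.
split=> // _ [j [c ->]] n n0; have [m p_m ->] := pfactor_coprime pp n0.
set l := logn p n.
have [x [span_x x_order x_pl]] : exists x,
    [/\ tower_span x, x *+ p ^ (j + l).+1 = 0 & x *+ p ^ l = us j *~ c].
  exists (us (j + l) *~ c); split; first by exists (j + l)%N, c.
    by rewrite pmulrn mulrzAC -pmulrn tower_order mul0rz.
  by rewrite pmulrn mulrzAC -pmulrn tower_mulrn.
have m_coprime : coprimez m%:Z (p ^ (j + l).+1)%:Z.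
  by rewrite /coprimez /gcdz !absz_nat; apply: coprimeXr; rewrite coprime_sym.
have [s xs] := mulrz_coprime_inv x_order m_coprime.
exists (x *~ s); split; first exact: subgroupMz.
by rewrite mulrnA -x_pl (pmulrn (x *~ s)) mulrzAC -xs.
Qed.

Lemma tower_span_socle x : us 0%N != 0 -> tower_span x -> x *+ p = 0 -> in_cycle (us 0%N) x.
Proof.
move=> us0 [j [c ->]]; rewrite pmulrn -mulrzA => xp.
have us_j : us j *+ p ^ j != 0 by rewrite -{1}[j]add0n tower_mulrn.
move: (order_pexp_dvdz pp (tower_order j) us_j xp).
rewrite expnSr PoszM dvdz_mul2r; last by rewrite eqz_nat -lt0n prime_gt0.
by move=> /dvdzP [q ->]; exists q; rewrite -mulrzA_C -pmulrn -{1}[j]add0n tower_mulrn.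
Qed.

End PTower.

Section SocleDivisible.
Variables (A : zmodType) (p : nat).
Hypothesis socle_div : forall w : A, w *+ p = 0 -> forall m, exists b, b *+ p ^ m = w.

Lemma socle_divisible_pexp k (x : A) : x *+ p ^ k = 0 -> forall m, exists b, b *+ p ^ m = x.
Proof.
elim: k x => [|k IHk] x; first by rewrite expn0 mulr1n => -> m; exists 0; rewrite mul0rn.
rewrite expnS mulrnA => /IHk xp m; have [b bx] := xp m.+1.
have : (x - b *+ p ^ m) *+ p = 0 by rewrite mulrnBl -mulrnA -expnSr bx subrr.
move=> /socle_div /(_ m) [b' bx']; exists (b + b').
by rewrite mulrnDl bx' addrC subrK.
Qed.

Lemma socle_divisible_tower (u : A) : u *+ p = 0 ->
  exists us : nat -> A, us 0%N = u /\ forall j, us j.+1 *+ p = us j.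
Proof.
move=> up.
have [r rP] : exists r : A -> A, forall x k, x *+ p ^ k = 0 -> r x *+ p = x.
  have root (x : A) : exists y, (exists k, x *+ p ^ k = 0) -> y *+ p = x.
    have [[k xk] | no_k] := pselect (exists k, x *+ p ^ k = 0); last by exists 0.
    by have [y yx] := socle_divisible_pexp xk 1; exists y; rewrite -yx expn1.
  by have [r rP] := choice root; exists r => x k xk; apply: rP; exists k.
pose us j := iter j r u.
have us_order j : us j *+ p ^ j.+1 = 0.
  by elim: j => [|j IHj]; rewrite ?expn1 // expnS mulrnA /us iterS (rP _ _ IHj).
by exists us; split=> // j; exact: rP (us_order j).
Qed.

End SocleDivisible.

Section PrimaryComponent.
Variables (A : zmodType) (p : nat).
Hypothesis pp : prime p.
Implicit Types (a u v w x y z : A).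

Lemma pure_of_exact_height a n w : a *+ p ^ n = w -> w *+ p = 0 ->
    ~ (exists y, y *+ p ^ n.+1 = w) ->
  forall (k : int) y, a *~ k = y *+ p ^ n.+1 -> a *~ k = 0.
Proof.
move=> aw wp w_ht k y aky.
have a_order : a *+ p ^ n.+1 = 0 by rewrite expnSr mulrnA aw wp.
suff ak : a *+ `|k| = 0 by case: (mulrz_absz a k) => ->; rewrite ak ?oppr0.
have [y' ay'] : exists y', a *+ `|k| = y' *+ p ^ n.+1.
  case: (mulrz_absz a k) aky => -> aky; first by exists y.
  by exists (- y); rewrite mulNrn -aky opprK.
have [k0 | k_gt0] := posnP `|k|; first by rewrite k0 mulr0n.
have [m p_m kE] := pfactor_coprime pp k_gt0; set l := logn p `|k| in kE.
have [nl | ln] := leqP n.+1 l.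
  by rewrite kE -(subnKC nl) expnD mulnCA mulrnA a_order mul0rn.
case: w_ht; have wm : w *+ m = y' *+ p ^ (n - l) *+ p ^ n.+1.
  have e : (p ^ n * m = `|k| * p ^ (n - l))%N.
    by rewrite kE -{1}(subnKC (ltnSE ln)) expnD mulnAC [(m * _)%N]mulnC.
  by rewrite -aw -mulrnA e mulrnA ay' mulrnAC.
have m_coprime : coprimez m%:Z p%:Z by rewrite coprimez_prime // dvdzE !absz_nat -prime_coprime.
have [s ws] := mulrz_coprime_inv wp m_coprime.
by exists (y' *+ p ^ (n - l) *~ s); rewrite ws -pmulrn wm mulrnzAC.
Qed.

Lemma pure_cyclic_projection a n : a *+ p ^ n.+1 = 0 -> a *+ p ^ n != 0 ->
    (forall (k : int) y, a *~ k = y *+ p ^ n.+1 -> a *~ k = 0) ->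
  exists pi, [/\ is_end pi, pi a = a & forall x, in_cycle a (pi x)].
Proof.
move=> a_order a_ord0 a_pure; set N := (p ^ n.+1)%N in a_order a_pure.
pose G0 := fun q : A * A => exists k y, q = (a *~ k + y *+ N, a *~ k).
have hG0 : partial_hom (in_cycle a) G0.
  split.
  - by exists 0, 0; rewrite mulr0z mul0rn addr0.
  - move=> _ _ _ _ [k [y [-> ->]]] [k' [y' [-> ->]]].
    exists (k - k'), (y - y'); congr pair; last by rewrite mulrzBr.
    by rewrite mulrzBr mulrnBl opprD addrACA.
  - move=> _ [k [y [aky ->]]]; apply: (a_pure k (- y)).
    by apply/eqP; rewrite mulNrn -addr_eq0 -aky.
  - by move=> _ _ [k [y [_ ->]]]; exists k.
have baer : baer_condition (in_cycle a) G0.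
  move=> G hG G0G x d d0 dvd_dom y Gxd.
  have GN : G (x *+ N, 0) by apply: G0G; exists 0, x; rewrite mulr0z add0r.
  have : (d%:Z %| N%:Z)%Z by apply/(dvd_dom N%:Z); exists 0; rewrite -pmulrn.
  rewrite dvdzE !absz_nat => /dvdnP [q Nq].
  have [c yc] : in_cycle a y by have [_ _ _ GT] := hG; exact: GT Gxd.
  have yq : y *+ q = 0.
    apply: (partial_hom_functional hG (partial_homMn hG q Gxd)).
    by rewrite -mulrnA mulnC -Nq.
  have : (N%:Z %| c * q%:Z)%Z.
    by apply: (order_pexp_dvdz pp a_order a_ord0); rewrite mulrzA -pmulrn -yc.
  rewrite Nq mulnC PoszM dvdz_mul2r => [/dvdzP [c' cc'] |]; last first.
    have N_gt0 : (0 < N)%N by rewrite expn_gt0 prime_gt0.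
    by rewrite eqz_nat -lt0n; move: N_gt0; rewrite Nq muln_gt0 => /andP [].
  by exists (a *~ c'); [exists c' | rewrite yc cc' pmulrn mulrzA].
have [pi [hpi piG0 pi_cycle]] := partial_hom_extend (in_cycle_subgroup a) hG0 baer.
exists pi; split=> //; apply: piG0; exists 1, 0; by rewrite mulr1z mul0rn addr0.
Qed.

End PrimaryComponent.

Section CentrallyEssentialTorsion.
Variable A : zmodType.
Hypothesis CE : end_centrally_essential A.
Implicit Types (a u v w x y z : A).

Section Primary.
Variable p : nat.
Hypothesis pp : prime p.

(* With e := 1 - pi, the map x |-> (coefficient of pi x) * e z is a corner
   for e; so e z = 0 and z lies in the socle of <a>. *)
Lemma ce_cyclic_summand_socle pi a n z : is_end pi -> pi a = a ->
    (forall x, in_cycle a (pi x)) -> a *+ p ^ n.+1 = 0 -> a *+ p ^ n != 0 ->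
  z *+ p = 0 -> in_cycle (a *+ p ^ n) z.
Proof.
move=> hpi pia pi_cycle a_order a_ord0 zp.
have [coef pi_coef] := choice pi_cycle.
have a_ann := order_pexp_dvdz pp a_order a_ord0.
have pi_idem x : pi (pi x) = pi x by rewrite [pi x]pi_coef is_endMz // pia.
pose e x := x - pi x; have he : is_end e by apply: is_endB.
have pi_e x : pi (e x) = 0 by rewrite hpi pi_idem subrr.
have ezp : e z *+ p = 0 by rewrite mulrnBl -is_endMn // zp is_end0 // subrr.
have ez_ann c : a *~ c = 0 -> e z *~ c = 0.
  move=> /a_ann pc; apply: (mulrz_dvdz_eq0 ezp); apply: dvdz_trans pc.
  by rewrite expnSr PoszM dvdz_mull.
pose h x := e z *~ coef x.
have hh : is_end h.
  move=> x y; apply/eqP; rewrite /h -mulrzBr -subr_eq0 -mulrzBr; apply/eqP/ez_ann.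
  by rewrite !mulrzBr -!pi_coef hpi subrr.
have ez0 : e z = 0.
  have <- : h a = e z.
    have : a *~ (coef a - 1) = 0 by rewrite mulrzBr -pi_coef pia mulr1z subrr.
    by move/ez_ann/eqP; rewrite mulrzBr mulr1z subr_eq0 => /eqP.
  apply: (ce_corner_eq0 CE he hh) => v; first by rewrite /e is_endMz // pi_e mul0rz subr0.
  by apply: ez_ann; rewrite -pi_coef pi_e.
have [c zc] := pi_cycle z.
have : a *~ (c * p%:Z) = 0 by rewrite mulrzA -pmulrn -zc -is_endMn // zp is_end0.
move=> /a_ann; rewrite expnSr PoszM dvdz_mul2r; last by rewrite eqz_nat -lt0n prime_gt0.
move=> /dvdzP [q cq]; exists q; move/eqP: ez0; rewrite subr_eq0 => /eqP ->.
by rewrite zc cq pmulrn mulrzA_C.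
Qed.

Lemma ce_socle_cyclic_divisible u v :
    (forall w, w *+ p = 0 -> forall m, exists y, y *+ p ^ m = w) ->
  u *+ p = 0 -> v *+ p = 0 -> u != 0 -> in_cycle u v.
Proof.
move=> socle_div up vp u0; apply: contrapT => v_out.
have [us [us0 us_root]] := socle_divisible_tower socle_div up.
have us0_p : us 0%N *+ p = 0 by rewrite us0.
have div_span := tower_span_divisible pp us_root us0_p.
move/eqP: (u0); apply; apply: (ce_divisible_eq0 CE div_span (z := v)).
  by exists 0%N, 1; rewrite us0 mulr1z.
move=> k span_vk; have [pk | pNk] := boolP (p%:Z %| k)%Z; first exact: mulrz_dvdz_eq0 up pk.
have k_coprime : coprimez k p%:Z by rewrite coprimez_prime.
have [s vs] := mulrz_coprime_inv vp k_coprime.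
case: v_out; rewrite -us0; apply: (tower_span_socle pp us_root us0_p) => //; first by rewrite us0.
by rewrite vs; apply: subgroupMz => //; case: div_span.
Qed.

Lemma ce_socle_cyclic u v : u *+ p = 0 -> v *+ p = 0 -> u != 0 -> in_cycle u v.
Proof.
move=> up vp u0.
have [[w [m [wp w_ht]]] | no_ht] :=
  pselect (exists w m, w *+ p = 0 /\ ~ exists y, y *+ p ^ m = w); last first.
  apply: ce_socle_cyclic_divisible => // w wp m; apply: contrapT => w_ht.
  by case: no_ht; exists w, m.
have [n [a [aw a_ht]]] := exact_height w_ht.
have a_order : a *+ p ^ n.+1 = 0 by rewrite expnSr mulrnA aw.
have a_ord0 : a *+ p ^ n != 0.
  by rewrite aw; apply: contra_notN a_ht => /eqP ->; exists 0; rewrite mul0rn.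
have [pi [hpi pia pi_cycle]] :=
  pure_cyclic_projection pp a_order a_ord0 (pure_of_exact_height pp aw wp a_ht).
have [cu uE] := ce_cyclic_summand_socle hpi pia pi_cycle a_order a_ord0 up.
have [cv vE] := ce_cyclic_summand_socle hpi pia pi_cycle a_order a_ord0 vp.
rewrite aw in uE vE.
have cu_coprime : coprimez cu p%:Z.
  by rewrite coprimez_prime //; apply: contra u0; rewrite uE => /(mulrz_dvdz_eq0 wp) ->.
have [s ws] := mulrz_coprime_inv wp cu_coprime.
by exists (s * cv); rewrite vE uE {1}ws mulrzA.
Qed.

Lemma ce_pexp_cyclic k x y : x *+ p ^ k.+1 = 0 -> x *+ p ^ k != 0 ->
  y *+ p ^ k.+1 = 0 -> in_cycle x y.
Proof.
elim: k x y => [|k IHk] x y.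
  by rewrite expn1 expn0 mulr1n => xp x0 yp; exact: ce_socle_cyclic.
move=> xpk xpk0 ypk.
have [c yc] : in_cycle (x *+ p) (y *+ p) by apply: IHk; rewrite -mulrnA -expnS.
have [e ye] : in_cycle (x *+ p ^ k.+1) (y - x *~ c).
  apply: ce_socle_cyclic => //; first by rewrite -mulrnA -expnSr.
  by rewrite mulrnBl yc mulrnzAC subrr.
by exists (c + e * (p ^ k.+1)%:Z); rewrite mulrzDr -mulrzA_C -pmulrn -ye addrC subrK.
Qed.

Lemma ce_end_pexp_scalar f k x : is_end f -> x *+ p ^ k = 0 -> in_cycle x (f x).
Proof.
move=> hf xpk; pose no_kill j := x *+ p ^ j == 0.
have [[|j] /eqP xpj minj] := ex_minnP (ex_intro no_kill k (introT eqP xpk)).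
  by move: xpj; rewrite expn0 mulr1n => ->; exists 0; rewrite is_end0 // mulr0z.
have xpj0 : x *+ p ^ j != 0 by apply: contraTneq (ltnSn j) => /eqP/minj; rewrite leqNgt => ->.
by apply: (ce_pexp_cyclic xpj xpj0); rewrite -is_endMn // xpj is_end0.
Qed.

End Primary.

Lemma ce_end_torsion_scalar f n x : is_end f -> (0 < n)%N -> x *+ n = 0 -> in_cycle x (f x).
Proof.
move=> hf; elim/ltn_ind: n x => n IHn x n0 xn.
have [n1 | n_gt1] := leqP n 1.
  have n_1 : n = 1%N by apply/eqP; rewrite eqn_leq n1.
  by move: xn; rewrite n_1 mulr1n => ->; exists 0; rewrite is_end0 // mulr0z.
have pp : prime (pdiv n) := pdiv_prime n_gt1; set p := pdiv n in pp.
have [m p_m nE] := pfactor_coprime pp n0; set l := logn p n in nE.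
have m_gt0 : (0 < m)%N by move: n0; rewrite nE muln_gt0 => /andP [].
have [m1 | m_gt1] := leqP m 1.
  have m_1 : m = 1%N by apply/eqP; rewrite eqn_leq m1.
  by apply: (ce_end_pexp_scalar pp (k := l) hf); rewrite -xn nE m_1 mul1n.
have l_gt0 : (0 < l)%N by rewrite logn_gt0 mem_primes pp n0 pdiv_dvd.
have pl_gt1 : (1 < p ^ l)%N by rewrite -{1}(expn0 p) ltn_exp2l ?prime_gt1.
apply: (end_in_cycle_coprime (r := (p ^ l)%N) (m := m) hf); first exact: coprimeXl.
- apply: (IHn (p ^ l)%N); first by rewrite nE ltn_Pmull // ltnW.
  + exact: ltnW.
  + by rewrite -mulrnA -nE.
- apply: (IHn m) => //; first by rewrite nE ltn_Pmulr // ltnW.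
  by rewrite -mulrnA mulnC -nE.
Qed.

Lemma ce_end_comm_torsion f g x : is_end f -> is_end g -> torsion_elt x ->
  f (g x) = g (f x).
Proof.
move=> hf hg [n [n0 xn]].
have [a fx] := ce_end_torsion_scalar hf n0 xn.
have [b gx] := ce_end_torsion_scalar hg n0 xn.
by rewrite gx is_endMz // fx is_endMz // gx -!mulrzA mulrC.
Qed.

End CentrallyEssentialTorsion.

(** * Non-reduced groups *)

Section NonReduced.
Variable A : zmodType.
Hypothesis CE : end_centrally_essential A.
Variables (D : A -> Prop) (d0 x1 : A).
Hypotheses (divD : divisible_subgroup D) (Dd0 : D d0) (d0_neq0 : d0 != 0).
Hypothesis x1_free : ~ torsion_elt x1.
Implicit Types (f g : A -> A) (x y : A).

Let tor_subgroup := torsion_elt_subgroup A.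

Lemma ce_divisible_not_torsion : exists2 d, D d & ~ torsion_elt d.
Proof.
apply: contrapT => no_d; move/eqP: (d0_neq0); apply; apply: (ce_divisible_eq0 CE divD Dd0 (z := x1)) => k Dx1k.
have [-> | k0] := eqVneq k 0; first by rewrite mulr0z.
case: x1_free; apply: (torsion_elt_mulrzK k0); apply: contrapT => x1k_free.
by case: no_d; exists (x1 *~ k).
Qed.

Lemma ce_divisible_cover x : exists2 y, D y & eqmod torsion_elt x y.
Proof.
have [d Dd d_free] := ce_divisible_not_torsion.
apply: contrapT => no_y; apply: d_free.
suff -> : d = 0 by exists 1%N; rewrite mul0rn.
apply: (ce_divisible_eq0 CE divD Dd (z := x)) => k Dxk.
have [-> | k0] := eqVneq k 0; first by rewrite mulr0z.
have DxK : D (x *+ `|k|).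
  by case: (mulrz_absz x k) Dxk => -> // /(subgroupN divD.1); rewrite opprK.
have k_gt0 : (0 < `|k|)%N by rewrite absz_gt0.
have [y [Dy yK]] := divD.2 _ DxK _ k_gt0.
by case: no_y; exists y => //; exists `|k|%N; rewrite mulrnBl yK subrr.
Qed.

Lemma ce_rank_one y1 y2 : ~ torsion_elt y1 ->
  exists m k, m != 0 /\ eqmod torsion_elt (y2 *~ m) (y1 *~ k).
Proof.
move=> y1_free; have [y Dy y1y] := ce_divisible_cover y1.
apply: contrapT => no_mk.
pose E z := D z /\ exists n k, n != 0 /\ eqmod torsion_elt (z *~ n) (y *~ k).
have sgE : is_subgroup E.
  split.
    split; first exact: subgroup0 divD.1.
    by exists 1, 0; split=> //; rewrite mulr0z mul0rz; exact: (eqmod_refl tor_subgroup).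
  move=> z1 z2 [D1 [n1 [k1 [n1_0 h1]]]] [D2 [n2 [k2 [n2_0 h2]]]].
  split; first exact: (subgroupB divD.1 D1 D2).
  exists (n1 * n2), (k1 * n2 - k2 * n1); split; first by rewrite mulf_neq0.
  have -> : (z1 - z2) *~ (n1 * n2) = z1 *~ n1 *~ n2 - z2 *~ n2 *~ n1.
    by rewrite mulrzBl -!mulrzA [n2 * n1]mulrC.
  have -> : y *~ (k1 * n2 - k2 * n1) = y *~ k1 *~ n2 - y *~ k2 *~ n1.
    by rewrite mulrzBr -!mulrzA.
  by apply: (eqmodB tor_subgroup); apply: (eqmodMz tor_subgroup).
have divE : divisible_subgroup E.
  split=> // z [Dz [n [k [n0 h]]]] m m0.
  have [w [Dw wm]] := divD.2 z Dz m m0.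
  exists w; split=> //; split=> //; exists (m%:Z * n), k.
  by split; [rewrite mulf_neq0 // eqz_nat -lt0n | rewrite mulrzA -pmulrn wm].
have y_neq0 : y != 0.
  by apply: contra_notN y1_free => /eqP y0; move: y1y; rewrite /eqmod y0 subr0.
have Ey : E y by split=> //; exists 1, 1; split=> //; exact: (eqmod_refl tor_subgroup).
move/eqP: y_neq0; apply; apply: (ce_divisible_eq0 CE divE Ey (z := y2)).
move=> k [_ [n [k' [n0 h]]]]; have [-> | k0] := eqVneq k 0; first by rewrite mulr0z.
case: no_mk; exists (k * n), k'; split; first by rewrite mulf_neq0.
rewrite mulrzA; apply: (eqmod_trans tor_subgroup h).
exact/(eqmodMz tor_subgroup)/(eqmod_sym tor_subgroup).
Qed.

Lemma ce_end_torsion_image_eq0 phi : is_end phi ->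
    (forall t, torsion_elt t -> phi t = 0) -> (forall x, torsion_elt (phi x)) ->
  forall x, phi x = 0.
Proof.
move=> hphi phi_tor tor_phi x; pose E y := exists x, y = phi x.
have divE : divisible_subgroup E.
  split.
    split; first by exists 0; rewrite is_end0.
    by move=> _ _ [a ->] [b ->]; exists (a - b); rewrite hphi.
  move=> _ [a ->] n n0; have [b Db ab] := ce_divisible_cover a.
  have [c [Dc cn]] := divD.2 b Db n n0.
  exists (phi c); split; first by exists c.
  rewrite -is_endMn // cn; apply/eqP; rewrite -subr_eq0 -hphi; apply/eqP/phi_tor.
  exact: (eqmod_sym tor_subgroup).
apply: (ce_divisible_eq0 CE divE (ex_intro _ x erefl) (z := x1)) => k [a x1k].
have [-> | k0] := eqVneq k 0; first by rewrite mulr0z.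
by case: x1_free; apply: (torsion_elt_mulrzK k0); rewrite x1k.
Qed.

Lemma ce_end_commutator_torsion f g x : is_end f -> is_end g ->
  torsion_elt (f (g x) - g (f x)).
Proof.
move=> hf hg; have [x_tor | x_free] := pselect (torsion_elt x).
  by rewrite (ce_end_comm_torsion CE hf hg x_tor) subrr; exact: (subgroup0 tor_subgroup).
have [m [k [m0 fx]]] := ce_rank_one (f x) x_free.
have [m' [k' [m'0 gx]]] := ce_rank_one (g x) x_free.
apply: (torsion_elt_mulrzK (mulf_neq0 m0 m'0)).
suff : eqmod torsion_elt (f (g x) *~ (m * m')) (g (f x) *~ (m * m')).
  by rewrite /eqmod mulrzBl.
apply: (eqmod_trans tor_subgroup (y := x *~ k *~ k')).
  rewrite mulrC mulrzA -(is_endMz _ _ hf).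
  apply: (eqmod_trans tor_subgroup (y := f (x *~ k') *~ m)).
    exact/(eqmodMz tor_subgroup)/eqmod_torsion_end.
  by rewrite (is_endMz _ _ hf) mulrzAC; apply: (eqmodMz tor_subgroup).
apply: (eqmod_sym tor_subgroup); rewrite mulrzA -(is_endMz _ _ hg).
apply: (eqmod_trans tor_subgroup (y := g (x *~ k) *~ m')).
  exact/(eqmodMz tor_subgroup)/eqmod_torsion_end.
rewrite (is_endMz _ _ hg) [g x *~ k *~ m']mulrzAC [x *~ k *~ k']mulrzAC.
exact: (eqmodMz tor_subgroup).
Qed.

Lemma ce_non_reduced_end_comm f g : is_end f -> is_end g ->
  forall x, f (g x) = g (f x).
Proof.
move=> hf hg x; apply/eqP; rewrite -subr_eq0; apply/eqP; move: x.
apply: (ce_end_torsion_image_eq0 (phi := fun x => f (g x) - g (f x))).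
- exact: is_endB (is_end_comp hf hg) (is_end_comp hg hf).
- by move=> t t_tor; rewrite (ce_end_comm_torsion CE hf hg t_tor) subrr.
- by move=> x; exact: ce_end_commutator_torsion hf hg.
Qed.

End NonReduced.

Theorem mainTheorem1 (A : zmodType) :
  (exists x : A, x != 0%R) ->
  (torsion_group A \/ non_reduced A) ->
  end_centrally_essential A ->
  end_commutative A.
Proof.
move=> _ tor_or_nonred CE f g hf hg x /=.
have [A_tor | A_not_tor] := pselect (torsion_group A).
  exact: (ce_end_comm_torsion CE hf hg (A_tor x)).
case: tor_or_nonred => [// | [D [divD [d [Dd d_neq0]]]]].
have [x1 x1_free] : exists x1 : A, ~ torsion_elt x1.
  apply: contrapT => /forallNP all_tor; apply: A_not_tor => y.
  exact: contrapT (all_tor y).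
exact: (ce_non_reduced_end_comm CE divD Dd d_neq0 x1_free hf hg x).
Qed.
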